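(* Let $\Gamma$ be a graph and let $f:\Gamma\to\Gamma$ be an irreducible, expanding graph map which is a homotopy equivalence and which is periodic on the vertex set of $\Gamma$ (i.e. $f_V:\mathcal{V}\Gamma\to\mathcal{V}\Gamma$ is a bijection). Then every fold decomposition of $f$ consists of at least $\mathfrak{S}(\Gamma)$ folds, where $\mathfrak{S}(\Gamma)$ is the stack score of $\Gamma$.
   Context: A graph $\Gamma$ is a finite 1-dimensional CW complex (multiple edges and loops allowed) with a chosen orientation on each edge; $\mathcal{V}\Gamma$ is its vertex set, $\mathcal{E}\Gamma$ its set of (positively oriented) edges, $\mathcal{E}^{\pm}\Gamma$ the set of edges with both orientations, $\bar e$ the reverse of $e$, and $\iota(e),\tau(e)$ the initial and terminal vertices. An edge path is a nonempty concatenation $u=e_1\cdots e_k$ of oriented edges with $\tau(e_i)=\iota(e_{i+1})$; $|u|=k$ counts edges without cancelling backtracks, and $u$ traverses an edge $e$ if $e$ or $\bar e$ occurs in it. A graph map $f:\Gamma_1\to\Gamma_2$ consists of a vertex map $f_V$ and an assignment of an edge path $f(e)$ in $\Gamma_2$ to each $e\in\mathcal{E}^\pm\Gamma_1$ with $\iota(f(e))=f_V(\iota(e))$ and $f(\bar e)=\overline{f(e)}$; it extends to edge paths by concatenation, powers are compositions, and $f$ is regarded as a continuous map. A graph isomorphism is a graph map with $f_V$ bijective which restricts to a bijection from $\mathcal{E}^\pm\Gamma_1$ onto the single edges $\mathcal{E}^\pm\Gamma_2$; an automorphism of $G$ is an isomorphism $G\to G$, and $\mathrm{Aut}(G)$ is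 the automorphism group. The transition matrix $T(f)$ of a self map has $(i,j)$ entry the number of times $f(e_i)$ traverses $e_j$. $f$ is irreducible if $T(f)$ is an irreducible matrix and every vertex has valence at least $3$; $f$ is expanding if $|f^n(e)|\to\infty$ as $n\to\infty$ for every edge $e$. Folds: for distinct oriented edges $e_0,e_1$ with $e_1\neq\bar e_0$ and $\iota(e_0)=\iota(e_1)$: the proper full fold of $e_1$ over $e_0$ subdivides $e_1=e_1''e_1'$ and identifies $e_1''$ with $e_0$ (map $e_1\mapsto e_0e_1'$, other edges fixed); the complete fold identifies $e_0$ and $e_1$ entirely; the partial fold subdivides $e_0=e_0'e_0''$, $e_1=e_1''e_1'$ and identifies $e_1''$ with $e_0'$ (map $e_0\mapsto e_0'e_0''$, $e_1\mapsto e_0'e_1'$). A fold decomposition of $f:\Gamma\to\Gamma$ with $m$ folds is an expression $f=h\circ f_m\circ\cdots\circ f_1$ with $\Gamma_1=\Gamma$, each $f_i:\Gamma_i\to\Gamma_{i+1}$ a fold and $h:\Gamma_{m+1}\to\Gamma$ a graph isomorphism. Stack score: a supergraph of $\Gamma$ is a graph $G$ containing $\Gamma$ as a subgraph. For a supergraph $G$ with $\mathcal{V}G=\mathcal{V}\Gamma$ and $\psi\in\mathrm{Aut}(G)$, let $\sim_\psi$ be the equivalence relation on $\mathcal{E}\Gamma$ (unoriented edges) generated by $a\sim_\psi\psi(a)$ whenever $\psi(a)$ (as an unoriented edge) lies in $\mathcal{E}\Gamma$. The stack score $\mathfrak{S}(\Gamma)$ is the minimum, over all such pairs $(G,\psi)$,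 of the number of $\sim_\psi$-equivalence classes. *)

From mathcomp Require Import all_boot all_order all_algebra.
From Stdlib Require Import ClassicalEpsilon.
Set Implicit Arguments. Unset Strict Implicit. Unset Printing Implicit Defensive.
Import GRing.Theory.

Record graph := Graph {
  gV : finType;
  gE : finType;            (* positively oriented edges *)
  gsrc : gE -> gV;
  gtgt : gE -> gV
}.

(* Oriented edges E^{+-}: (e, true) = e, (e, false) = \bar e. *)
Definition oedge (G : graph) : finType := (gE G * bool)%type.
Definition orev (G : graph) (x : oedge G) : oedge G := (x.1, ~~ x.2).
Definition oi (G : graph) (x : oedge G) : gV G :=
  if x.2 then gsrc x.1 else gtgt x.1.
Definition ot (G : graph) (x : oedge G) : gV G :=
  if x.2 then gtgt x.1 else gsrc x.1.

(* [walk u p v]: p is a (possibly empty) sequence of consecutive oriented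
   edges from u to v.  Edge paths in the paper are the nonempty walks. *)
Fixpoint walk (G : graph) (u : gV G) (p : seq (oedge G)) (v : gV G) : bool :=
  match p with
  | [::] => u == v
  | x :: p' => (oi x == u) && walk (ot x) p' v
  end.

Definition prev (G : graph) (p : seq (oedge G)) : seq (oedge G) :=
  rev (map (@orev G) p).

Fixpoint red (G : graph) (p : seq (oedge G)) : seq (oedge G) :=
  match p with
  | [::] => [::]
  | x :: p' =>
      match red p' with
      | y :: t => if y == orev x then t else x :: y :: t
      | [::] => [:: x]
      end
  end.

(* Maps: a vertex map and an edge path for each positive edge;              *)
(* f(\bar e) := \bar{f(e)}.                                                  *)
Record gmap (G1 G2 : graph) := GMap {
  gmV : gV G1 -> gV G2;
  gmE : gE G1 -> seq (oedge G2)
}.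

Definition gmO (G1 G2 : graph) (f : gmap G1 G2) (x : oedge G1) : seq (oedge G2) :=
  if x.2 then gmE f x.1 else prev (gmE f x.1).

(* image of a sequence of oriented edges (concatenation, no cancellation) *)
Definition gmP (G1 G2 : graph) (f : gmap G1 G2) (p : seq (oedge G1)) :=
  flatten (map (gmO f) p).

Definition is_cmap (G1 G2 : graph) (f : gmap G1 G2) : Prop :=
  forall e, walk (gmV f (gsrc e)) (gmE f e) (gmV f (gtgt e)).

Definition is_gmap (G1 G2 : graph) (f : gmap G1 G2) : Prop :=
  is_cmap f /\ forall e, gmE f e != [::].

Definition gmap_id (G : graph) : gmap G G := GMap (fun v => v) (fun e => [:: (e, true)]).

Definition gcomp (G1 G2 G3 : graph) (g : gmap G2 G3) (f : gmap G1 G2) : gmap G1 G3 :=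
  GMap (fun v => gmV g (gmV f v)) (fun e => gmP g (gmE f e)).

Fixpoint gpow (G : graph) (f : gmap G G) (n : nat) : gmap G G :=
  match n with
  | 0 => gmap_id G
  | n'.+1 => gcomp f (gpow f n')
  end.

Definition gmap_eq (G1 G2 : graph) (f g : gmap G1 G2) : Prop :=
  (forall v, gmV f v = gmV g v) /\ (forall e, gmE f e = gmE g e).

Definition is_graph_iso (G1 G2 : graph) (h : gmap G1 G2) : Prop :=
  is_gmap h /\ bijective (gmV h) /\
  exists psi : oedge G1 -> oedge G2, bijective psi /\ forall x, gmO h x = [:: psi x].

(* A homotopy between cellular maps f, g : G1 -> G2 is given by vertex      *)
(* tracks gamma_v (paths from f v to g v) with f(e) gamma_{tau e} homotopic *)
(* rel endpoints to gamma_{iota e} g(e), i.e. equal after free reduction.   *)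
Definition homotopic (G1 G2 : graph) (f g : gmap G1 G2) : Prop :=
  exists gamma : gV G1 -> seq (oedge G2),
    (forall v, walk (gmV f v) (gamma v) (gmV g v)) /\
    (forall e, red (gmE f e ++ gamma (gtgt e)) = red (gamma (gsrc e) ++ gmE g e)).

Definition homotopy_equiv (G1 G2 : graph) (f : gmap G1 G2) : Prop :=
  exists g : gmap G2 G1, is_cmap g /\
    homotopic (gcomp g f) (gmap_id G1) /\ homotopic (gcomp f g) (gmap_id G2).

Definition transition (G : graph) (f : gmap G G) : 'M[int]_(#|gE G|) :=
  \matrix_(i, j) Posz (count (fun x : oedge G => x.1 == enum_val j) (gmE f (enum_val i))).

Definition irreducible_matrix (n : nat) (M : 'M[int]_n) : Prop :=
  forall i j, exists k, (0 < k)%N /\ (0 < (M ^+ k) i j)%R.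

(* valence = number of oriented edges starting at v (loops count twice) *)
Definition valence (G : graph) (v : gV G) : nat := #|[set x : oedge G | oi x == v]|.

Definition irreducible_map (G : graph) (f : gmap G G) : Prop :=
  irreducible_matrix (transition f) /\ forall v : gV G, (3 <= valence v)%N.

Definition expanding (G : graph) (f : gmap G G) : Prop :=
  forall (e : gE G) (B : nat), exists N, forall n, (N <= n)%N -> (B < size (gmE (gpow f n) e))%N.

(* Folds (each described up to graph isomorphism of the target).           *)
Definition fold_cond (G : graph) (e0 e1 : oedge G) : Prop :=
  e0 <> e1 /\ e1 <> orev e0 /\ oi e0 = oi e1.

(* proper full fold of e1 over e0: e1 = e1'' e1', e1'' identified with e0;
   psi x is the image edge of x (x <> e1, \bar e1), psi e1 plays the role of e1' *)
Definition proper_full_fold (G G' : graph) (f : gmap G G') (e0 e1 : oedge G) : Prop :=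
  bijective (gmV f) /\
  exists psi : oedge G -> oedge G',
    bijective psi /\ (forall x, psi (orev x) = orev (psi x)) /\
    (forall x, x <> e1 -> x <> orev e1 ->
       oi (psi x) = gmV f (oi x) /\ gmO f x = [:: psi x]) /\
    oi (psi e1) = gmV f (ot e0) /\ ot (psi e1) = gmV f (ot e1) /\
    gmO f e1 = [:: psi e0; psi e1].

Definition complete_fold (G G' : graph) (f : gmap G G') (e0 e1 : oedge G) : Prop :=
  (forall y, exists v, gmV f v = y) /\
  (forall u v, gmV f u = gmV f v <->
      u = v \/ (u = ot e0 /\ v = ot e1) \/ (u = ot e1 /\ v = ot e0)) /\
  exists psi : oedge G -> oedge G',
    (forall y, exists x, psi x = y) /\
    (forall x y, psi x = psi y <->
       x = y \/ (x = e0 /\ y = e1) \/ (x = e1 /\ y = e0) \/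
       (x = orev e0 /\ y = orev e1) \/ (x = orev e1 /\ y = orev e0)) /\
    (forall x, psi (orev x) = orev (psi x)) /\
    (forall x, oi (psi x) = gmV f (oi x) /\ gmO f x = [:: psi x]).

(* partial fold: e0 = e0' e0'', e1 = e1'' e1', e1'' identified with e0';
   a = e0', b = e0'', c = e1', w = the new vertex *)
Definition partial_fold (G G' : graph) (f : gmap G G') (e0 e1 : oedge G) : Prop :=
  injective (gmV f) /\
  exists w : gV G',
    (forall v, gmV f v <> w) /\ (forall y, y = w \/ exists v, gmV f v = y) /\
    exists (psi : oedge G -> oedge G') (a b c : oedge G'),
      let X := fun x => [/\ x <> e0, x <> orev e0, x <> e1 & x <> orev e1] in
      (forall x, psi (orev x) = orev (psi x)) /\
      (forall x y, X x -> X y -> psi x = psi y -> x = y) /\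
      uniq [:: a.1; b.1; c.1] /\
      (forall x, X x -> (psi x).1 \notin [:: a.1; b.1; c.1]) /\
      (forall y, (exists x, X x /\ psi x = y) \/ y.1 \in [:: a.1; b.1; c.1]) /\
      oi a = gmV f (oi e0) /\ ot a = w /\ oi b = w /\ ot b = gmV f (ot e0) /\
      oi c = w /\ ot c = gmV f (ot e1) /\
      (forall x, X x -> oi (psi x) = gmV f (oi x) /\ gmO f x = [:: psi x]) /\
      gmO f e0 = [:: a; b] /\ gmO f e1 = [:: a; c].

Definition is_fold (G G' : graph) (f : gmap G G') : Prop :=
  is_gmap f /\
  exists e0 e1 : oedge G, fold_cond e0 e1 /\
    (proper_full_fold f e0 e1 \/ complete_fold f e0 e1 \/ partial_fold f e0 e1).

Inductive fold_chain (G : graph) : forall G' : graph, nat -> gmap G G' -> Prop :=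
  | fc_nil : @fold_chain G G 0 (gmap_id G)
  | fc_cons (G1 G2 : graph) (n : nat) (k : gmap G G1) (f : gmap G1 G2) :
      @fold_chain G G1 n k -> is_fold f -> @fold_chain G G2 n.+1 (gcomp f k).

Definition fold_decomposition (G : graph) (f : gmap G G) (m : nat) : Prop :=
  exists (G' : graph) (k : gmap G G') (h : gmap G' G),
    @fold_chain G G' m k /\ is_graph_iso h /\ gmap_eq f (gcomp h k).

(* A supergraph with the same vertex set: an edge type E' with endpoints in *)
(* gV G and an injection incl of gE G preserving endpoints.                 *)
Definition supergraph (G : graph) (E' : finType) (s t : E' -> gV G) : graph :=
  Graph s t.

Definition stack_rel (G : graph) (E' : finType) (s t : E' -> gV G)
  (incl : gE G -> E') (psi : gmap (supergraph s t) (supergraph s t)) : rel (gE G) :=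
  fun a b => (gmE psi (incl a) == [:: (incl b, true)])
             || (gmE psi (incl a) == [:: (incl b, false)]).

Definition stack_classes (G : graph) (E' : finType) (s t : E' -> gV G)
  (incl : gE G -> E') (psi : gmap (supergraph s t) (supergraph s t)) : nat :=
  let r := stack_rel incl psi in
  let r' := fun a b => r a b || r b a in
  #|[set [set b | connect r' a b] | a : gE G]|.

Definition stack_value (G : graph) (n : nat) : Prop :=
  exists (E' : finType) (s t : E' -> gV G) (incl : gE G -> E')
         (psi : gmap (supergraph s t) (supergraph s t)),
    injective incl /\ (forall e, s (incl e) = gsrc e /\ t (incl e) = gtgt e) /\
    is_graph_iso psi /\ stack_classes incl psi = n.

Definition stack_value_b (G : graph) : pred nat :=
  fun n => if excluded_middle_informative (stack_value G n) then true else false.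

Lemma stack_value_ex (G : graph) : exists n, stack_value_b G n.
Proof.
exists (stack_classes (G := G) (s := @gsrc G) (t := @gtgt G) id (gmap_id _)).
rewrite /stack_value_b; case: excluded_middle_informative => // [[]].
exists (gE G), (@gsrc G), (@gtgt G), id, (gmap_id _).
split; first by [].
split; first by [].
split=> //.
split.
  split=> [e|e] //=; by rewrite !eqxx.
split; first by exists id.
exists id; split; first by exists id.
by case=> e [].
Qed.

Definition stack_score (G : graph) : nat := ex_minn (stack_value_ex G).

From Pilot Require Import Defs.
From mathcomp Require Import all_boot all_order all_algebra zify.
From Stdlib Require Import ClassicalEpsilon.
Set Implicit Arguments. Unset Strict Implicit. Unset Printing Implicit Defensive.

(* Both sides are compared with the number of edges of Γ outside a set R that
   contains, for each edge b of the form f(a), exactly one such edge a.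

   Folds: for k the composite of the first folds, the potential
   |EΓ'| + 2|k(VΓ)| - |{edges of Γ' of the form k(a)}| - 2|VΓ'|
   vanishes for the identity and grows by at most one with each fold.  If f = h ∘ k
   with h an isomorphism and f_V bijective, then k is onto the vertices, so the
   potential of k, hence the number of folds, is at least |EΓ| - |R|.

   Stack score: stack L copies of the edges of Γ on the vertex set VΓ, the copy at
   level j having its endpoints moved by f_V^j, where L is a multiple of the period
   of f_V.  Shifting every edge up one level and then exchanging the level-1 copy of
   each a ∈ R with the level-0 copy of f(a) is an automorphism under which a ~ f(a).
   Since f is expanding, iterating a |-> f(a) leaves R, so every class contains an
   edge outside R. *)

Lemma card_leq_setI_setC (T : finType) (A B : {set T}) :
  (#|A| <= #|A :&: B| + #|~: B|)%N.
Proof. by rewrite -(cardsID B A) leq_add2l subset_leq_card // setDE subsetIr. Qed.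

Lemma imsetT_surj (A B : finType) (h : A -> B) :
  (forall z, exists x, h x = z) -> h @: [set: A] = [set: B].
Proof. by move=> h_surj; apply/setP => z; have [x <-] := h_surj z; rewrite inE imset_f. Qed.

Lemma card_imset_identify2 (A B : finType) (g : A -> B) (u v : A) (S : {set A}) :
  (forall x y, g x = g y -> x = y \/ (x = u /\ y = v) \/ (x = v /\ y = u)) ->
  g u = g v ->
  (#|g @: S| + [&& u != v, u \in S & v \in S] = #|S|)%N.
Proof.
move=> g_eq guv; case: (boolP [&& _, _ & _]) => [/and3P [nuv uS vS] | nS].
  have -> : g @: S = g @: (S :\ v).
    apply/setP => z; apply/imsetP/imsetP => [[x xS ->] | [x /setD1P [_ xS] ->]].
      have [-> | nxv] := eqVneq x v; last by exists x; rewrite // !inE nxv.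
      by exists u; rewrite // !inE uS nuv.
    by exists x.
  rewrite card_in_imset; first by rewrite [in RHS](cardsD1 v) vS addn1.
  move=> x y /setD1P [nxv _] /setD1P [nyv _] /g_eq [// | [[_ yv] | [xv _]]].
    by rewrite yv eqxx in nyv.
  by rewrite xv eqxx in nxv.
rewrite addn0 card_in_imset // => x y xS yS /g_eq [// | [[ex ey] | [ex ey]]];
  subst x y; apply/eqP; apply: contraNT nS => n.
  by rewrite n xS yS.
by rewrite eq_sym n xS yS.
Qed.

Section Walks.
Variable G : graph.
Implicit Types (u v w : gV G) (x y : oedge G) (p q : seq (oedge G)).

Lemma card_oedge : #|oedge G| = (#|gE G| * 2)%N.
Proof. by rewrite card_prod card_bool. Qed.

Lemma orevK : involutive (@orev G).
Proof. by case=> e []. Qed.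

Lemma oi_orev x : oi (orev x) = ot x.
Proof. by case: x => e []. Qed.

Lemma ot_orev x : ot (orev x) = oi x.
Proof. by case: x => e []. Qed.

Lemma oedge_fst_eq x y : x.1 = y.1 -> x = y \/ x = orev y.
Proof. by case: x y => [e [] ] [e' [] ] /= ->; auto. Qed.

Lemma oedge_neq_fst (e : gE G) b x : e != x.1 -> (e, b) <> x.
Proof. by move=> nex exb; rewrite -exb eqxx in nex. Qed.

Lemma walk1 u x v : walk u [:: x] v = (oi x == u) && (ot x == v).
Proof. by []. Qed.

Lemma walk_cat u p v q w : walk u p v -> walk v q w -> walk u (p ++ q) w.
Proof. by elim: p u => [|x p IH] u /=; [move/eqP-> | case/andP=> -> /IH]. Qed.

Lemma walk_prev u p v : walk u p v -> walk v (Defs.prev p) u.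
Proof.
elim: p u => [|x p IH] u /=; first by move/eqP->.
case/andP=> /eqP xu /IH pv; rewrite /Defs.prev /= rev_cons -cats1.
by apply: walk_cat pv _; rewrite walk1 oi_orev ot_orev xu !eqxx.
Qed.

End Walks.

Section CellularMaps.
Variables G1 G2 : graph.

Lemma gmO_walk (g : gmap G1 G2) x :
  is_cmap g -> walk (gmV g (oi x)) (gmO g x) (gmV g (ot x)).
Proof. by move=> g_cm; case: x => e [] /=; [apply: g_cm | apply/walk_prev/g_cm]. Qed.

Lemma gmP_walk (g : gmap G1 G2) u p v :
  is_cmap g -> walk u p v -> walk (gmV g u) (gmP g p) (gmV g v).
Proof.
move=> g_cm; elim: p u => [|x p IH] u /=; first by move/eqP->.
by case/andP=> /eqP <- /IH; apply: walk_cat (gmO_walk x g_cm).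
Qed.

End CellularMaps.

Lemma is_cmap_comp (G1 G2 G3 : graph) (g : gmap G2 G3) (k : gmap G1 G2) :
  is_cmap g -> is_cmap k -> is_cmap (gcomp g k).
Proof. by move=> g_cm k_cm e; apply: gmP_walk (k_cm e). Qed.

Section OrientedEdgeMaps.
Variables (G1 G2 : graph) (psi : oedge G1 -> oedge G2).
Hypothesis psi_orev : forall x, psi (orev x) = orev (psi x).

Definition edge_map (y : gE G1) : gE G2 := (psi (y, true)).1.

Lemma edge_map_fst x : edge_map x.1 = (psi x).1.
Proof. by case: x => e [] //; rewrite /edge_map -[(e, false)]/(orev (e, true)) psi_orev. Qed.

Lemma edge_map_eq y y' : edge_map y = edge_map y' -> exists b, psi (y, true) = psi (y', b).
Proof.
move=> /oedge_fst_eq [E | E]; first by exists true.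
by exists false; rewrite E -[(y', false)]/(orev (y', true)) psi_orev.
Qed.

Lemma edge_map_inj : injective psi -> injective edge_map.
Proof. by move=> psi_inj y y' /edge_map_eq [b /psi_inj [->]]. Qed.

End OrientedEdgeMaps.

Lemma bij_card_edges (G1 G2 : graph) (psi : oedge G1 -> oedge G2) :
  bijective psi -> #|gE G1| = #|gE G2|.
Proof. by move/bij_eq_card; rewrite !card_oedge => /eqP; rewrite eqn_mul2r => /eqP. Qed.

Definition vimg (G G' : graph) (k : gmap G G') : {set gV G'} := [set gmV k u | u : gV G].

Definition single_images (G G' : graph) (k : gmap G G') : {set gE G'} :=
  [set y | [exists a, exists s, gmE k a == [:: (y, s)]]].

Section Images.
Variables (G G1 G2 : graph) (g : gmap G1 G2) (k : gmap G G1).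

Lemma vimg_comp : vimg (gcomp g k) = gmV g @: vimg k.
Proof. by rewrite /vimg -imset_comp. Qed.

Lemma ot_single_images (x : oedge G1) :
  is_cmap k -> x.1 \in single_images k -> ot x \in vimg k.
Proof.
move=> k_cm /[!inE] /existsP [a /existsP [s /eqP ka]].
have := k_cm a; rewrite ka walk1 {ka} /oi /ot /= => /andP [/eqP src /eqP tgt].
have [src_k tgt_k] : gsrc x.1 \in vimg k /\ gtgt x.1 \in vimg k.
  by case: s src tgt => -> ->; split; apply: imset_f.
by rewrite /ot; case: x.2.
Qed.

Lemma edge_map_single_images (psi : oedge G1 -> oedge G2) (A : {set gE G1}) :
  (forall y, y \in A -> gmE g y = [:: psi (y, true)]) ->
  edge_map psi @: (single_images k :&: A) \subset single_images (gcomp g k).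
Proof.
move=> g_single; apply/subsetP => _ /imsetP [y /setIP [/[!inE] ky yA] ->].
case/existsP: ky => a /existsP [s /eqP ka]; apply/existsP; exists a; apply/existsP.
exists (if s then (psi (y, true)).2 else ~~ (psi (y, true)).2).
rewrite /= ka /gmP /= cats0 /gmO g_single //.
rewrite /edge_map /Defs.prev; case: (psi _) => y' b /=.
by case: s {ka}; rewrite ?eqxx.
Qed.

End Images.

Definition fold_potential (G G' : graph) (k : gmap G G') : int :=
  ((#|gE G'| + 2 * #|vimg k|)%N%:Z - (#|single_images k| + 2 * #|gV G'|)%N%:Z)%R.

Lemma fold_cond_fst_neq (G : graph) (e0 e1 : oedge G) : fold_cond e0 e1 -> e0.1 != e1.1.
Proof.
by move=> [n01 [n10 _]]; apply/eqP => /esym /oedge_fst_eq [/esym | ].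
Qed.

Section FoldStep.
Variables (G G1 G2 : graph) (g : gmap G1 G2) (k : gmap G G1) (e0 e1 : oedge G1).

Lemma fold_potential_proper_full_fold :
  proper_full_fold g e0 e1 -> (fold_potential (gcomp g k) <= fold_potential k + 1)%R.
Proof.
move=> [gV_bij [psi [psi_bij [psi_orev [psi_gmO _]]]]].
have cardE := bij_card_edges psi_bij.
have cardV := bij_eq_card gV_bij.
have cardI : (#|vimg (gcomp g k)| <= #|vimg k|)%N by rewrite vimg_comp leq_imset_card.
have cardS : (#|single_images k :&: ~: [set e1.1]| <= #|single_images (gcomp g k)|)%N.
  have psi_inj := edge_map_inj psi_orev (bij_inj psi_bij).
  rewrite -(card_imset _ psi_inj); apply/subset_leq_card/edge_map_single_images.
  move=> y /[!inE] ye1; apply: (proj2 (psi_gmO (y, true) _ _)); exact: oedge_neq_fst.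
have := card_leq_setI_setC (single_images k) (~: [set e1.1]).
rewrite setCK cards1 /fold_potential; lia.
Qed.

Lemma fold_potential_complete_fold :
  is_cmap k -> fold_cond e0 e1 -> complete_fold g e0 e1 ->
  (fold_potential (gcomp g k) <= fold_potential k + 1)%R.
Proof.
move=> k_cm fc [gV_surj [gV_eq [psi [psi_surj [psi_eq [psi_orev psi_gmO]]]]]].
have gV_identify x y := proj1 (gV_eq x y).
have gV_e01 : gmV g (ot e0) = gmV g (ot e1) by apply/gV_eq; auto.
have psi_identify y y' : edge_map psi y = edge_map psi y' ->
    y = y' \/ (y = e0.1 /\ y' = e1.1) \/ (y = e1.1 /\ y' = e0.1).
  move/(edge_map_eq psi_orev) => [b /psi_eq].
  case=> [[-> _] | ]; first by left.
  by case=> [|[|[|]]] [/(congr1 fst) /= -> /(congr1 fst) /= ->]; auto.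
have psi_e01 : edge_map psi e0.1 = edge_map psi e1.1.
  by rewrite !(edge_map_fst psi_orev); congr fst; apply/psi_eq; auto.
have cardE := card_imset_identify2 [set: gE G1] psi_identify psi_e01.
have cardV := card_imset_identify2 [set: gV G1] gV_identify gV_e01.
have cardI := card_imset_identify2 (vimg k) gV_identify gV_e01.
have cardS := card_imset_identify2 (single_images k) psi_identify psi_e01.
rewrite !imsetT_surj ?cardsT ?inE /= ?(fold_cond_fst_neq fc) in cardE cardV; last first.
- move=> z; have [x xz] := psi_surj (z, true).
  by exists x.1; rewrite (edge_map_fst psi_orev) xz.
- exact: gV_surj.
have S_sub : edge_map psi @: single_images k \subset single_images (gcomp g k).
  rewrite -[single_images k]setIT; apply: edge_map_single_images => y _.
  exact: (proj2 (psi_gmO (y, true))).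
have ends : ([&& e0.1 \in single_images k & e1.1 \in single_images k]
             <= [&& ot e0 \in vimg k & ot e1 \in vimg k])%N.
  case: (boolP (_ && _)) => // /andP [e0_k e1_k].
  by rewrite (ot_single_images k_cm e0_k) (ot_single_images k_cm e1_k).
have := subset_leq_card S_sub; move: cardS; rewrite (fold_cond_fst_neq fc) /=.
move: ends cardI cardV; rewrite -vimg_comp /fold_potential.
case: (ot e0 != ot e1) => /=; lia.
Qed.

Lemma fold_potential_partial_fold :
  fold_cond e0 e1 -> partial_fold g e0 e1 ->
  (fold_potential (gcomp g k) <= fold_potential k + 1)%R.
Proof.
move=> fc [gV_inj [w [w_new [_ [psi [a [b [c]]]]]]]] /=.
move=> [psi_orev [psi_inj [_ [_ [psi_cov [_ [_ [_ [_ [_ [_ [psi_gmO _]]]]]]]]]]]].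
pose D := [set e0.1; e1.1].
have off_D y bb : y \in ~: D ->
    [/\ (y, bb) <> e0, (y, bb) <> orev e0, (y, bb) <> e1 & (y, bb) <> orev e1].
  by rewrite !inE negb_or => /andP [n0 n1]; split; apply: oedge_neq_fst.
have cardD : #|D| = 2 by rewrite cards2 (fold_cond_fst_neq fc).
have cardE : (#|gE G2| <= #|~: D| + 3)%N.
  pose abc := [set x in [:: a.1; b.1; c.1]].
  have E_sub : [set: gE G2] \subset (edge_map psi @: ~: D) :|: abc.
    apply/subsetP => z _; rewrite inE.
    case: (psi_cov (z, true)) => [[x [[x0 x0' x1 x1'] xz]] | z_abc].
      apply/orP; left; apply/imsetP; exists x.1; last by rewrite (edge_map_fst psi_orev) xz.
      by rewrite !inE negb_or; apply/andP; split; apply/eqP => /oedge_fst_eq [].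
    by rewrite inE z_abc orbT.
  have abc3 : (#|abc| <= 3)%N by rewrite cardsE (card_size [:: a.1; b.1; c.1]).
  have := subset_leq_card E_sub; have := leq_imset_card (edge_map psi) (~: D).
  rewrite cardsT cardsU; lia.
have cardS : (#|single_images k :&: ~: D| <= #|single_images (gcomp g k)|)%N.
  have psi_inj_D : {in ~: D &, injective (edge_map psi)}.
    move=> y y' yD y'D /(edge_map_eq psi_orev) [bb].
    by move/(psi_inj _ _ (off_D _ _ yD) (off_D _ _ y'D)) => [].
  rewrite -(card_in_imset (sub_in2 (subsetP (subsetIr _ _)) psi_inj_D)).
  by apply/subset_leq_card/edge_map_single_images => y /(off_D y true) /psi_gmO [].
have cardV : (#|gV G1| + 1 <= #|gV G2|)%N.
  have w_notin : w \notin gmV g @: [set: gV G1].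
    by apply/imsetP => [[v _ /esym /w_new]].
  have := max_card (w |: gmV g @: [set: gV G1]).
  by rewrite cardsU1 w_notin card_imset // cardsT addnC.
have cardI : (#|vimg (gcomp g k)| <= #|vimg k|)%N by rewrite vimg_comp leq_imset_card.
have := card_leq_setI_setC (single_images k) (~: D).
have := cardsC D; rewrite setCK cardD /fold_potential; lia.
Qed.

End FoldStep.

Lemma fold_potential_fold (G G1 G2 : graph) (g : gmap G1 G2) (k : gmap G G1) :
  is_cmap k -> is_fold g -> (fold_potential (gcomp g k) <= fold_potential k + 1)%R.
Proof.
move=> k_cm [_ [e0 [e1 [fc [pff | [cf | pf]]]]]].
- exact: fold_potential_proper_full_fold pff.
- exact: fold_potential_complete_fold k_cm fc cf.
- exact: fold_potential_partial_fold fc pf.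
Qed.

Lemma fold_chain_cmap (G G' : graph) n (k : gmap G G') : fold_chain n k -> is_cmap k.
Proof.
elim=> [e | {}G' G'' {}n {}k g _ k_cm [[g_cm _] _]]; last exact: is_cmap_comp.
by rewrite walk1 /oi /ot /= !eqxx.
Qed.

Lemma fold_potential_id (G : graph) : fold_potential (gmap_id G) = 0%R.
Proof.
rewrite /fold_potential.
have -> : vimg (gmap_id G) = setT by apply/setP => v; rewrite inE imset_f.
have -> : single_images (gmap_id G) = setT.
  by apply/setP => y; rewrite !inE; apply/existsP; exists y; apply/existsP; exists true.
by rewrite !cardsT GRing.subrr.
Qed.

Lemma fold_potential_chain (G G' : graph) n (k : gmap G G') :
  fold_chain n k -> (fold_potential k <= n%:Z)%R.
Proof.
elim=> [| {}G' G'' {}n {}k g k_chain IH g_fold]; first by rewrite fold_potential_id.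
have := fold_potential_fold (fold_chain_cmap k_chain) g_fold; lia.
Qed.

Section GraphIso.
Variables (G G1 G2 : graph) (h : gmap G1 G2) (k : gmap G G1).
Hypothesis h_iso : is_graph_iso h.

Lemma graph_iso_card_edges : #|gE G1| = #|gE G2|.
Proof. by case: h_iso => [_ [_ [psi [psi_bij _]]]]; apply: bij_card_edges psi_bij. Qed.

Lemma card_single_images_iso_comp :
  (#|single_images k| <= #|single_images (gcomp h k)|)%N.
Proof.
case: h_iso => [_ [_ [psi [psi_bij h_psi]]]].
have psi_orev x : psi (orev x) = orev (psi x).
  suff psi_false e : psi (e, false) = orev (psi (e, true)).
    by case: x => e [] /=; rewrite psi_false ?orevK.
  by have := h_psi (e, false); rewrite /gmO /= -[gmE h e]/(gmO h (e, true)) h_psi => -[].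
rewrite -[single_images k]setIT -(card_imset _ (edge_map_inj psi_orev (bij_inj psi_bij))).
by apply/subset_leq_card/edge_map_single_images => y _; apply: h_psi (y, true).
Qed.

End GraphIso.

Lemma single_images_eq (G G' : graph) (k k' : gmap G G') :
  gmap_eq k k' -> single_images k = single_images k'.
Proof. by move=> [_ kE]; apply/setP => y; rewrite !inE; under eq_existsb do rewrite kE. Qed.

Section RepresentativeEdges.
Variables (G : graph) (f : gmap G G).

Definition head_edge (a : gE G) : oedge G := head (a, true) (gmE f a).

Definition rep_edge (b : gE G) : gE G :=
  odflt b [pick a | [exists s, gmE f a == [:: (b, s)]]].

Definition rep_edges : {set gE G} :=
  [set a | (size (gmE f a) == 1%N) && (rep_edge (head_edge a).1 == a)].

Lemma rep_edgesE a : a \in rep_edges -> gmE f a = [:: head_edge a].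
Proof. by rewrite inE /head_edge => /andP [/eqP]; case: (gmE f a) => [|x []]. Qed.

Lemma rep_edges_single a :
  a \in rep_edges -> (head_edge a).1 \in single_images f /\ rep_edge (head_edge a).1 = a.
Proof.
move=> a_rep; have fa := rep_edgesE a_rep; move: a_rep; rewrite inE => /andP [_ /eqP ->].
split=> //; rewrite inE; apply/existsP; exists a; apply/existsP; exists (head_edge a).2.
by rewrite fa; case: (head_edge a).
Qed.

Lemma single_images_rep b :
  b \in single_images f -> rep_edge b \in rep_edges /\ (head_edge (rep_edge b)).1 = b.
Proof.
rewrite inE => /existsP [a fa].
have [s frep] : exists s, gmE f (rep_edge b) = [:: (b, s)].
  rewrite /rep_edge; case: pickP => [a' /existsP [s /eqP] | /(_ a)]; last by rewrite fa.
  by exists s.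
have head_rep : (head_edge (rep_edge b)).1 = b by rewrite /head_edge frep.
by rewrite inE frep head_rep eqxx.
Qed.

Lemma card_single_images_le_rep : (#|single_images f| <= #|rep_edges|)%N.
Proof.
apply: leq_trans (leq_imset_card (fun a => (head_edge a).1) _); apply/subset_leq_card.
by apply/subsetP => b /single_images_rep [b_rep <-]; apply: imset_f.
Qed.

Lemma rep_edges_ends a : is_cmap f -> a \in rep_edges ->
  oi (head_edge a) = gmV f (gsrc a) /\ ot (head_edge a) = gmV f (gtgt a).
Proof.
by move=> f_cm /rep_edgesE fa; move: (f_cm a); rewrite fa walk1 => /andP [/eqP -> /eqP ->].
Qed.

Definition rep_step (a : gE G) : gE G := if a \in rep_edges then (head_edge a).1 else a.

Lemma gpow_rep_step n a : (forall i, (i < n)%N -> iter i rep_step a \in rep_edges) ->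
  exists s, gmE (gpow f n) a = [:: (iter n rep_step a, s)].
Proof.
elim: n => [|n IH] rep_n; first by exists true.
have [s fna] := IH (fun i lt_in => rep_n i (ltnW lt_in)).
have an_rep := rep_n n (ltnSn n).
rewrite /= fna /gmP /= cats0 {2}/rep_step an_rep /gmO (rep_edgesE an_rep).
by case: s {fna}; case: (head_edge _) => b s /=; [exists s | exists (~~ s)].
Qed.

Lemma expanding_leaves_rep_edges a : expanding f ->
  exists i, iter i rep_step a \notin rep_edges.
Proof.
move=> f_exp; have [n /(_ n (leqnn n))] := f_exp a 1%N.
case: (boolP [forall i : 'I_n, iter i rep_step a \in rep_edges]) => [/forallP rep_n | ].
  by have [s ->] := gpow_rep_step (fun i lt_in => rep_n (Ordinal lt_in)).
by rewrite negb_forall => /existsP [i ?] _; exists i.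
Qed.

End RepresentativeEdges.

Lemma iter_fact_id (T : finType) (s : T -> T) n x :
  injective s -> (#|T| <= n)%N -> iter n`! s x = x.
Proof.
move=> s_inj leTn; have /dvdnP [q ->] : order s x %| n`!.
  by apply: dvdn_fact; rewrite order_gt0 (leq_trans (max_card _) leTn).
by rewrite iterM (iter_fix _ (iter_order s_inj x)).
Qed.

Lemma oi_eqb (G : graph) (e : gE G) b s : oi (e, b == s) = if b then oi (e, s) else ot (e, s).
Proof. by case: b; case: s. Qed.

Section Tower.
Variables (G : graph) (f : gmap G G).
Hypotheses (f_cm : is_cmap f) (fV_bij : bijective (gmV f)).

(* A multiple of the period of every vertex under f_V (by [iter_fact_id]) that is
   at least 2, so that levels 0 and 1 are distinct. *)
Definition nlevels : nat := (#|gV G|).+2`!.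

Lemma nlevels_gt1 : (1 < nlevels)%N.
Proof. by rewrite /nlevels factS (leq_trans _ (leq_pmulr _ (fact_gt0 _))). Qed.

Definition level0 : 'I_nlevels := Ordinal (ltnW nlevels_gt1).
Definition level1 : 'I_nlevels := Ordinal nlevels_gt1.

Lemma ordS_level0 : ordS level0 = level1.
Proof. by apply: val_inj; rewrite /= modn_small // nlevels_gt1. Qed.

Lemma iter_ordS (j : 'I_nlevels) v : iter (ordS j) (gmV f) v = gmV f (iter j (gmV f) v).
Proof.
rewrite /ordS /=; case: (ltngtP j.+1 nlevels) => [lt_jn | | jn].
- by rewrite modn_small.
- by rewrite ltnNge ltn_ord.
rewrite jn modnn -iterS jn /nlevels iter_fact_id //; first exact: bij_inj fV_bij.
by rewrite -addn2 leq_addr.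
Qed.

Definition tower_src (x : gE G * 'I_nlevels) : gV G := iter x.2 (gmV f) (gsrc x.1).
Definition tower_tgt (x : gE G * 'I_nlevels) : gV G := iter x.2 (gmV f) (gtgt x.1).
Definition tower : graph := supergraph tower_src tower_tgt.

Lemma tower_oi e j b : oi (((e, j), b) : oedge tower) = iter j (gmV f) (oi (e, b)).
Proof. by case: b. Qed.

Definition shift_level (x : oedge tower) : oedge tower :=
  let: ((e, j), b) := x in ((e, ordS j), b).

Lemma shift_level_bij : bijective shift_level.
Proof.
exists (fun x : oedge tower => let: ((e, j), b) := x in ((e, ord_pred j), b)).
  by case=> [[e j] b] /=; rewrite ordSK.
by case=> [[e j] b] /=; rewrite ord_predK.
Qed.

Lemma shift_level_orev x : shift_level (orev x) = orev (shift_level x).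
Proof. by case: x => [[e j] b]. Qed.

Lemma shift_level_oi x : oi (shift_level x) = gmV f (oi x).
Proof. by case: x => [[e j] b]; rewrite !tower_oi iter_ordS. Qed.

Definition swap_rep (x : oedge tower) : oedge tower :=
  let: ((e, j), b) := x in
  if (j == level1) && (e \in rep_edges f) then
    (((head_edge f e).1, level0), b == (head_edge f e).2)
  else if (j == level0) && (e \in single_images f) then
    ((rep_edge f e, level1), b == (head_edge f (rep_edge f e)).2)
  else x.

Lemma swap_rep_involutive : involutive swap_rep.
Proof.
case=> [[e j] b] /=; have [-> | nj1] /= := eqVneq j level1.
  case: (boolP (e \in rep_edges f)) => e_rep /=; last by rewrite (negbTE e_rep).
  have [-> ->] := rep_edges_single e_rep.
  by case: b; case: (head_edge f e).2.
have [-> | nj0] /= := eqVneq j level0.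
  case: (boolP (e \in single_images f)) => e_single /=; last by rewrite (negbTE e_single).
  have [r_rep head_r] := single_images_rep e_single.
  rewrite r_rep; case: (head_edge f _) head_r => h s /= ->.
  by case: b; case: s.
by rewrite (negbTE nj1) (negbTE nj0).
Qed.

Lemma swap_rep_orev x : swap_rep (orev x) = orev (swap_rep x).
Proof.
case: x => [[e j] b]; rewrite /swap_rep /orev /=.
case: ifP => _; first by case: b; case: (head_edge f e).2.
by case: ifP => _ //; case: b; case: (head_edge f (rep_edge f e)).2.
Qed.

Lemma swap_rep_oi x : oi (swap_rep x) = oi x.
Proof.
case: x => [[e j] b] /=; case: ifP => [/andP [/eqP -> e_rep] | _].
  rewrite !tower_oi /= oi_eqb; have := rep_edges_ends f_cm e_rep.
  by case: (head_edge f e) => h s /= [-> ->]; case: b.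
case: ifP => [/andP [/eqP -> e_single] | _] //.
have [r_rep head_r] := single_images_rep e_single.
rewrite !tower_oi /= oi_eqb; have := rep_edges_ends f_cm r_rep.
case: (head_edge f _) head_r => h s /= -> [].
by case: s => /= src_e tgt_e; case: b; rewrite /= ?src_e ?tgt_e.
Qed.

Definition stack_aut : gmap tower tower :=
  @GMap tower tower (gmV f) (fun e : gE tower => [:: swap_rep (shift_level (e, true))]).

Lemma stack_aut_iso : is_graph_iso stack_aut.
Proof.
have oi_psi x : oi (swap_rep (shift_level x)) = gmV f (oi x).
  by rewrite swap_rep_oi shift_level_oi.
have orev_psi x : swap_rep (shift_level (orev x)) = orev (swap_rep (shift_level x)).
  by rewrite shift_level_orev swap_rep_orev.
split; [split=> // e | split=> //].
  by rewrite walk1 oi_psi -oi_orev -orev_psi oi_psi; apply/andP; split; apply/eqP.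
exists (fun x => swap_rep (shift_level x)); split.
  exact: bij_comp (inv_bij swap_rep_involutive) shift_level_bij.
by case=> e [] //; rewrite -[(e, false)]/(orev (e, true)) orev_psi.
Qed.

Definition level0_edge (e : gE G) : gE G * 'I_nlevels := (e, level0).

Lemma stack_rel_head_edge a : a \in rep_edges f ->
  stack_rel level0_edge stack_aut a (head_edge f a).1.
Proof.
move=> a_rep; rewrite /stack_rel /= ordS_level0 /= a_rep /level0_edge.
by case: (head_edge f a).2; rewrite /= !eqxx ?orbT.
Qed.

Lemma stack_classes_tower_le :
  expanding f -> (stack_classes level0_edge stack_aut <= #|~: rep_edges f|)%N.
Proof.
move=> f_exp; pose r := stack_rel level0_edge stack_aut; pose r' a b := r a b || r b a.
have r'_sym : connect_sym r' by apply: sym_connect_sym => a b; rewrite /r' orbC.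
have connect_rep_step a i : connect r' a (iter i (rep_step f) a).
  elim: i => [|i IH]; first exact: connect0.
  apply: connect_trans IH _; rewrite iterS /rep_step; case: ifP => // a_rep.
  by apply: connect1; rewrite /r' /r stack_rel_head_edge.
rewrite /stack_classes /= -/r -/r'.
apply: leq_trans (leq_imset_card (fun t => [set b | connect r' t b]) _).
apply/subset_leq_card/subsetP => _ /imsetP [a _ ->].
have [i i_out] := expanding_leaves_rep_edges a f_exp.
apply/imsetP; exists (iter i (rep_step f) a); first by rewrite inE.
by apply/setP => b; rewrite !inE (same_connect r'_sym (connect_rep_step a i)).
Qed.

Lemma stack_value_tower : stack_value G (stack_classes level0_edge stack_aut).
Proof.
exists (gE G * 'I_nlevels)%type, tower_src, tower_tgt, level0_edge, stack_aut.
by split; [move=> a b [] | split; [| split; [exact: stack_aut_iso |]]].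
Qed.

End Tower.

Lemma stack_score_le (G : graph) n : stack_value G n -> (stack_score G <= n)%N.
Proof.
move=> Gn; rewrite /stack_score; case: ex_minnP => s _; apply.
by rewrite /stack_value_b; case: excluded_middle_informative.
Qed.

Theorem theoremB (G : graph) (f : gmap G G) :
  is_gmap f -> irreducible_map f -> expanding f -> homotopy_equiv f ->
  bijective (gmV f) ->
  forall m : nat, fold_decomposition f m -> (stack_score G <= m)%N.
Proof.
move=> [f_cm _] _ f_exp _ fV_bij m [G' [k [h [k_chain [h_iso f_hk]]]]].
have vimg_k : vimg k = [set: gV G'].
  apply/setP => y; rewrite inE; have [[_ [hV_bij _]] [fV _]] := (h_iso, f_hk).
  have [fVi _ fViK] := fV_bij; apply/imsetP; exists (fVi (gmV h y)) => //.
  by apply: (bij_inj hV_bij); have := fV (fVi (gmV h y)); rewrite fViK => /esym.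
have card_S := card_single_images_iso_comp k h_iso.
rewrite -(single_images_eq f_hk) in card_S.
have := fold_potential_chain k_chain.
rewrite /fold_potential vimg_k cardsT (graph_iso_card_edges h_iso).
have := card_single_images_le_rep f; have := cardsC (rep_edges f).
have := stack_score_le (stack_value_tower f_cm fV_bij).
have := stack_classes_tower_le f_exp; lia.
Qed.
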